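(* Fix $t\in[H]$ and $u>0$. Let $\mathcal D_2$ consist of $l$ i.i.d. episodes from behavior policy $\mu$, and let $V_{t+1},V^{\rm in}_{t+1}:\mathcal S\to\mathbb R$ be fixed (not depending on $\mathcal D_2$) with $\|V_{t+1}-V^{\rm in}_{t+1}\|_\infty\le2u$. Let $f(s,a)=4u\sqrt{\log(2HSA/\delta)/(l\,d^\mu_t(s,a))}$, let $n'_{t,s,a}$ be the number of episodes in $\mathcal D_2$ with $(s_t,a_t)=(s,a)$, and define \[ g_t(s,a)=\begin{cases}P_t(\cdot|s,a)^\top[V_{t+1}-V^{\rm in}_{t+1}]-f(s,a),& n'_{t,s,a}<\frac12l\,d^\mu_t(s,a),\\ \frac1{n'_{t,s,a}}\sum_{j=1}^l[V_{t+1}(s'^{(j)}_{t+1})-V^{\rm in}_{t+1}(s'^{(j)}_{t+1})]\mathbf 1[s'^{(j)}_t=s,a'^{(j)}_t=a]-f(s,a),&\text{otherwise.}\end{cases} \] Then with probability at least $1-\delta/H$, for all $(s,a)$ with $d^\mu_t(s,a)>0$, \[ 0\le P_t(\cdot|s,a)^\top[V_{t+1}-V^{\rm in}_{t+1}]-g_t(s,a)\le8u\sqrt{\frac{\log(2HSA/\delta)}{l\,d^\mu_t(s,a)}}. \]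
   Context: Finite-horizon tabular MDP with $S$ states, $A$ actions, horizon $H$, transitions $P_t$; episodes generated as $s_1\sim d_1$, $a_t\sim\mu_t(\cdot|s_t)$, $s_{t+1}\sim P_t(\cdot|s_t,a_t)$; $(s'^{(j)}_t,a'^{(j)}_t)$ denote the data of the $j$-th episode of $\mathcal D_2$. $d^\mu_t(s,a)=\mathbb P^\mu(s_t=s,a_t=a)$. $\delta\in(0,1)$. *)

From HB Require Import structures.
From mathcomp Require Import all_boot all_order all_algebra.
From mathcomp Require Import reals exp.
Set Implicit Arguments. Unset Strict Implicit. Unset Printing Implicit Defensive.
Import Order.TTheory GRing.Theory Num.Theory.
Local Open Scope ring_scope.

(* Time steps are 0-indexed: states s_0..s_H, actions a_0..a_{H-1};
   step t : 'I_H is the paper's step t+1, and s_{t+1} is the next state. *)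

Definition episode (H : nat) (S A : finType) : finType :=
  ({ffun 'I_H.+1 -> S} * {ffun 'I_H -> A})%type.

Definition st (H : nat) (S A : finType) (e : episode H S A) (t : 'I_H) : S :=
  e.1 (widen_ord (leqnSn H) t).
Definition act (H : nat) (S A : finType) (e : episode H S A) (t : 'I_H) : A :=
  e.2 t.
Definition nxt (H : nat) (S A : finType) (e : episode H S A) (t : 'I_H) : S :=
  e.1 (lift ord0 t).

Definition is_distr (R : realType) (T : finType) (p : T -> R) : Prop :=
  (forall x, 0 <= p x) /\ \sum_(x : T) p x = 1.

Definition ep_prob (R : realType) (H : nat) (S A : finType)
  (d1 : S -> R) (mu : 'I_H -> S -> A -> R) (P : 'I_H -> S -> A -> S -> R)
  (e : episode H S A) : R :=
  d1 (e.1 ord0) *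
  \prod_(t < H) (mu t (st e t) (act e t) * P t (st e t) (act e t) (nxt e t)).

Definition dmu (R : realType) (H : nat) (S A : finType)
  (d1 : S -> R) (mu : 'I_H -> S -> A -> R) (P : 'I_H -> S -> A -> S -> R)
  (t : 'I_H) (s : S) (a : A) : R :=
  \sum_(e : episode H S A | (st e t == s) && (act e t == a)) ep_prob d1 mu P e.

(* A dataset of l episodes; they are i.i.d., so its law is the product law. *)
Definition dataset (l H : nat) (S A : finType) : finType :=
  {ffun 'I_l -> episode H S A}.

Definition data_prob (R : realType) (l H : nat) (S A : finType)
  (d1 : S -> R) (mu : 'I_H -> S -> A -> R) (P : 'I_H -> S -> A -> S -> R)
  (D : dataset l H S A) : R :=
  \prod_(j < l) ep_prob d1 mu P (D j).

Definition Pr_data (R : realType) (l H : nat) (S A : finType)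
  (d1 : S -> R) (mu : 'I_H -> S -> A -> R) (P : 'I_H -> S -> A -> S -> R)
  (E : pred (dataset l H S A)) : R :=
  \sum_(D : dataset l H S A | E D) data_prob d1 mu P D.

Definition ncount (l H : nat) (S A : finType) (D : dataset l H S A)
  (t : 'I_H) (s : S) (a : A) : nat :=
  #|[set j : 'I_l | (st (D j) t == s) && (act (D j) t == a)]|.

Definition PV (R : realType) (H : nat) (S A : finType)
  (P : 'I_H -> S -> A -> S -> R) (t : 'I_H) (s : S) (a : A) (V : S -> R) : R :=
  \sum_(s' : S) P t s a s' * V s'.

Definition fbonus (R : realType) (H : nat) (S A : finType) (l : nat)
  (u delta d : R) : R :=
  4 * u * Num.sqrt (ln (2 * H%:R * #|S|%:R * #|A|%:R / delta) / (l%:R * d)).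

Definition gfun (R : realType) (l H : nat) (S A : finType)
  (d1 : S -> R) (mu : 'I_H -> S -> A -> R) (P : 'I_H -> S -> A -> S -> R)
  (u delta : R) (V Vin : S -> R) (D : dataset l H S A)
  (t : 'I_H) (s : S) (a : A) : R :=
  let d := dmu d1 mu P t s a in
  let n := ncount D t s a in
  let f := fbonus H S A l u delta d in
  if (n%:R < l%:R * d / 2)
  then PV P t s a (fun x => V x - Vin x) - f
  else (n%:R)^-1 *
       \sum_(j < l | (st (D j) t == s) && (act (D j) t == a))
          (V (nxt (D j) t) - Vin (nxt (D j) t)) - f.

From HB Require Import structures.
From mathcomp Require Import all_boot all_order all_algebra.
From mathcomp Require Import reals exp.
From mathcomp Require Import all_classical all_reals.
From mathcomp Require Import topology normedtype sequences derive realfun.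
From mathcomp Require Import ring lra.
Set Implicit Arguments. Unset Strict Implicit. Unset Printing Implicit Defensive.
Import Order.TTheory GRing.Theory Num.Theory.
Import numFieldNormedType.Exports.
Local Open Scope ring_scope.

(* For a fixed (s, a) and a sign, deviations of the empirical mean of
   V - V^in over the episodes of D_2 visiting (s, a) at step t are controlled by
   a Chernoff bound over the l i.i.d. episodes.  By the Markov property the next
   state of a visiting episode is drawn from P_t(.|s,a), so Hoeffding's lemma
   bounds the moment generating function of its centred increment; with the tilt
   f/(4u^2) and a penalty f^2/(8u^2) per visit, every episode contributes a factor
   at most one, and requiring n' >= l d/2 visits costs exp(-f^2 l d/(16u^2)),
   which is delta/(2HSA) by the choice of f.  When n' < l d/2, g_t is
   P_t^T (V - V^in) - f by definition and there is nothing to prove.  A union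
   bound over the 2SA triples (s, a, sign) gives delta/H. *)

Section HoeffdingLemma.
Local Open Scope classical_set_scope.
Variable R : realType.
Implicit Types (f df : R -> R) (a b h : R).

Lemma is_derive_within_continuous f df :
  (forall x : R, is_derive x 1 f (df x)) -> forall a b, {within `[a, b], continuous f}.
Proof.
move=> fdf a b; apply: continuous_subspaceT => x.
exact/differentiable_continuous/derivable1_diffP/ex_derive.
Qed.

Lemma is_derive_ge0_le f df a b : (forall x : R, is_derive x 1 f (df x)) ->
  (forall x : R, a <= x <= b -> 0 <= df x) -> a <= b -> f a <= f b.
Proof.
move=> fdf df_ge0 ab; have cf := is_derive_within_continuous fdf.
have [c cab fE] := MVT_segment ab (fun x _ => fdf x) (cf _ _).
by rewrite -subr_ge0 fE mulr_ge0 ?subr_ge0 // df_ge0 // -in_itv.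
Qed.

Lemma is_derive_le_at0 f df : (forall x : R, is_derive x 1 f (df x)) ->
  (forall x : R, x * df x <= 0) -> forall h, f h <= f 0.
Proof.
move=> fdf xdf_le0 h.
have cf := is_derive_within_continuous fdf.
case: (ltgtP h 0) => [h_lt0|h_gt0|->] //.
- have [c /[!in_itv] /= /andP[hc c0] fE] := MVT h_lt0 (fun x _ => fdf x) (cf _ _).
  have := xdf_le0 c; nra.
- have [c /[!in_itv] /= /andP[c0 ch] fE] := MVT h_gt0 (fun x _ => fdf x) (cf _ _).
  have := xdf_le0 c; nra.
Qed.

Variable p : R.
Hypothesis p_ge0 : 0 <= p.
Hypothesis p_le1 : p <= 1.

(* [ratio h = mgf h / expR (p h + h^2/8)] has a derivative of the sign of
   [- h * slack h], and [slack] is nondecreasing with [slack 0 = 0] because its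
   derivative is [1/4 - tilt h (1 - tilt h) >= 0]; hence [ratio] peaks at
   [ratio 0 = 1]. *)
Let mgf h := 1 - p + p * expR h.
Let tilt h := p * expR h / mgf h.
Let slack h := p + h / 4 - tilt h.
Let ratio h := mgf h * expR (- (p * h + h ^+ 2 / 8)).

Lemma mgf_gt0 h : 0 < mgf h.
Proof.
rewrite /mgf; have := expR_gt0 h.
case: (leP 1 (expR h)) => e1 e_gt0.
  have : 0 <= p * (expR h - 1) by rewrite mulr_ge0 // subr_ge0.
  lra.
have : 0 <= (1 - p) * (1 - expR h) by rewrite mulr_ge0 // subr_ge0 // ltW.
lra.
Qed.

Lemma is_derive_mgf h : is_derive h 1 mgf (p * expR h).
Proof. by apply: is_derive_eq; rewrite /GRing.scale /=; ring. Qed.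

Lemma is_derive_tilt h : is_derive h 1 tilt (tilt h * (1 - tilt h)).
Proof.
have mgf_neq0 := lt0r_neq0 (mgf_gt0 h).
have dV := is_deriveV mgf_neq0 (is_derive_mgf h).
have dexp : is_derive h 1 (fun x => p * expR x) (p * expR h).
  by apply: is_derive_eq; rewrite /GRing.scale /=; ring.
have tiltE : tilt = (fun x => p * expR x) * (fun x => (mgf x)^-1) by [].
rewrite {1}tiltE; apply: (is_derive_eq (is_deriveM dexp dV)).
by rewrite /GRing.scale /= /tilt; field.
Qed.

Lemma is_derive_slack h : is_derive h 1 slack ((tilt h - 1 / 2) ^+ 2).
Proof.
apply: (is_derive_eq (is_deriveB _ (is_derive_tilt h))).
by rewrite /GRing.scale /=; field.
Qed.

Lemma slack0 : slack 0 = 0.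
Proof. by rewrite /slack /tilt /mgf expR0 mulr1 subrK divr1 mul0r addr0 subrr. Qed.

Lemma mul_slack_ge0 h : 0 <= h * slack h.
Proof.
have slack_ndecr x y : x <= y -> slack x <= slack y.
  by apply: is_derive_ge0_le => [z|z _]; [exact: is_derive_slack | exact: sqr_ge0].
case: (leP 0 h) => h0.
  by have := slack_ndecr 0 h h0; rewrite slack0; nra.
by have := slack_ndecr h 0 (ltW h0); rewrite slack0; nra.
Qed.

Lemma is_derive_ratio h :
  is_derive h 1 ratio (- (expR (- (p * h + h ^+ 2 / 8)) * mgf h * slack h)).
Proof.
have dE : is_derive h 1 (fun x : R => - (p * x + x ^+ 2 / 8)) (- (p + h / 4)).
  by apply: is_derive_eq; rewrite /GRing.scale /=; field.
have ratioE : ratio = mgf * (expR \o (fun x : R => - (p * x + x ^+ 2 / 8))) by [].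
rewrite {1}ratioE.
apply: (is_derive_eq (is_deriveM (is_derive_mgf h) (is_derive1_comp (is_derive_expR _) dE))).
rewrite /GRing.scale /= /slack /tilt; field.
exact: lt0r_neq0 (mgf_gt0 h).
Qed.

Lemma hoeffding_bernoulli h : 1 - p + p * expR h <= expR (p * h + h ^+ 2 / 8).
Proof.
have ratio_le1 : ratio h <= 1.
  have -> : 1 = ratio 0.
    by rewrite /ratio /mgf expR0 mulr1 subrK expr0n /= mul0r mulr0 addr0 oppr0 expR0 mulr1.
  apply: (is_derive_le_at0 is_derive_ratio) => x.
  have pos_factor_gt0 := mulr_gt0 (expR_gt0 (- (p * x + x ^+ 2 / 8))) (mgf_gt0 x).
  by rewrite mulrN oppr_le0 mulrCA; apply: mulr_ge0; [exact: ltW | exact: mul_slack_ge0].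
by move: ratio_le1; rewrite /ratio expRN ler_pdivrMr ?expR_gt0 // mul1r.
Qed.

End HoeffdingLemma.

Lemma expR_le_chord (R : realType) (lam a b y : R) : a < b -> a <= y <= b ->
  expR (lam * y) <= ((b - y) * expR (lam * a) + (y - a) * expR (lam * b)) / (b - a).
Proof.
move=> ab /andP[ay yb]; rewrite ler_pdivlMr ?subr_gt0 //.
have tangent z : expR (lam * y) * (1 + lam * (z - y)) <= expR (lam * z).
  have -> : lam * z = lam * y + lam * (z - y) by ring.
  by rewrite expRD ler_wpM2l ?expR_ge0 ?expR_ge1Dx.
have ta : (b - y) * (expR (lam * y) * (1 + lam * (a - y))) <= (b - y) * expR (lam * a).
  by rewrite ler_wpM2l ?subr_ge0.
have tb : (y - a) * (expR (lam * y) * (1 + lam * (b - y))) <= (y - a) * expR (lam * b).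
  by rewrite ler_wpM2l ?subr_ge0.
have -> : expR (lam * y) * (b - a) = (b - y) * (expR (lam * y) * (1 + lam * (a - y))) +
    (y - a) * (expR (lam * y) * (1 + lam * (b - y))) by ring.
exact: lerD.
Qed.

Lemma hoeffding_lemma (R : realType) (T : finType) (p Z : T -> R) (a b lam : R) :
  is_distr p -> (forall x, a <= Z x <= b) -> a < b -> \sum_x p x * Z x = 0 ->
  \sum_x p x * expR (lam * Z x) <= expR (lam ^+ 2 * (b - a) ^+ 2 / 8).
Proof.
move=> [p_ge0 p_sum1] Zab ab EZ0.
have ba_neq0 : b - a != 0 by rewrite subr_eq0 gt_eqF.
have a_le0 : a <= 0.
  rewrite -EZ0 -[a]mul1r -p_sum1 mulr_suml; apply: ler_sum => x _.
  by rewrite ler_wpM2l //; case/andP: (Zab x).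
have b_ge0 : 0 <= b.
  rewrite -EZ0 -[b]mul1r -p_sum1 mulr_suml; apply: ler_sum => x _.
  by rewrite ler_wpM2l //; case/andP: (Zab x).
set A := expR (lam * a); set B := expR (lam * b).
have chord : \sum_x p x * expR (lam * Z x) <= (b * A - a * B) / (b - a).
  apply: (@le_trans _ _ (\sum_x (p x * ((b * A - a * B) / (b - a)) +
                                 p x * Z x * ((B - A) / (b - a))))).
    apply: ler_sum => x _.
    have -> : p x * ((b * A - a * B) / (b - a)) + p x * Z x * ((B - A) / (b - a)) =
        p x * (((b - Z x) * A + (Z x - a) * B) / (b - a)) by field.
    by rewrite ler_wpM2l // expR_le_chord.
  by rewrite big_split /= -!mulr_suml p_sum1 EZ0 mul0r mul1r addr0.
(* [r] is the weight of [b] in the mean-zero law on the two points [a, b]. *)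
set r := - a / (b - a).
have r_ge0 : 0 <= r by rewrite divr_ge0 ?oppr_ge0 // subr_ge0 ltW.
have r_le1 : r <= 1 by rewrite ler_pdivrMr ?subr_gt0 // mul1r; lra.
apply: (le_trans chord).
have -> : (b * A - a * B) / (b - a) = A * (1 - r + r * expR (lam * (b - a))).
  rewrite /A /B /r (_ : lam * b = lam * a + lam * (b - a)); last by ring.
  by rewrite expRD; field.
have -> : lam ^+ 2 * (b - a) ^+ 2 / 8 =
    lam * a + (r * (lam * (b - a)) + (lam * (b - a)) ^+ 2 / 8) by rewrite /r; field.
by rewrite expRD ler_wpM2l ?expR_ge0 // hoeffding_bernoulli.
Qed.

Section ChainSum.
Variables (R : numDomainType) (T : finType).

Definition ffun_cons n (x0 : T) (y : {ffun 'I_n -> T}) : {ffun 'I_n.+1 -> T} :=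
  [ffun i => if unlift ord0 i is Some j then y j else x0].

Lemma ffun_cons0 n x0 (y : {ffun 'I_n -> T}) : ffun_cons x0 y ord0 = x0.
Proof. by rewrite ffunE unlift_none. Qed.

Lemma ffun_consS n x0 (y : {ffun 'I_n -> T}) j : ffun_cons x0 y (lift ord0 j) = y j.
Proof. by rewrite ffunE liftK. Qed.

Lemma sum_ffunS n (F : {ffun 'I_n.+1 -> T} -> R) :
  \sum_x F x = \sum_x0 \sum_(y : {ffun 'I_n -> T}) F (ffun_cons x0 y).
Proof.
rewrite pair_big /= (reindex (fun xy => ffun_cons xy.1 xy.2)) //=.
exists (fun x => (x ord0, [ffun j => x (lift ord0 j)])) => [[x0 y] _ | x _] /=.
  by rewrite ffun_cons0; congr pair; apply/ffunP => j; rewrite ffunE ffun_consS.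
by apply/ffunP => i; rewrite ffunE; case: unliftP => [j ->|->]; rewrite ?ffunE.
Qed.

Definition chain_sum n (init : T -> R) (K : 'I_n -> T -> T -> R) : R :=
  \sum_(x : {ffun 'I_n.+1 -> T}) init (x ord0) *
    \prod_(k < n) K k (x (widen_ord (leqnSn n) k)) (x (lift ord0 k)).

Lemma chain_sum0 init (K : 'I_0 -> T -> T -> R) : chain_sum init K = \sum_s init s.
Proof.
rewrite /chain_sum sum_ffunS; apply: eq_bigr => x0 _.
under eq_bigr do rewrite big_ord0 mulr1 ffun_cons0.
by rewrite sumr_const card_ffun card_ord expn0.
Qed.

Lemma chain_sumS n init (K : 'I_n.+1 -> T -> T -> R) :
  chain_sum init K =
  chain_sum (fun y => \sum_x init x * K ord0 x y) (fun k => K (lift ord0 k)).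
Proof.
rewrite /chain_sum sum_ffunS exchange_big /=; apply: eq_bigr => y _.
rewrite mulr_suml; apply: eq_bigr => x0 _.
rewrite big_ord_recl ffun_cons0 mulrA; congr (_ * _ * _).
  have -> : widen_ord (leqnSn n.+1) ord0 = ord0 by apply: val_inj.
  by rewrite ffun_cons0 ffun_consS.
apply: eq_bigr => k _.
have -> : widen_ord (leqnSn n.+1) (lift ord0 k) = lift ord0 (widen_ord (leqnSn n) k).
  exact: val_inj.
by rewrite !ffun_consS.
Qed.

Lemma chain_sum_stochastic n init (K : 'I_n -> T -> T -> R) :
  (forall k s, \sum_s' K k s s' = 1) -> chain_sum init K = \sum_s init s.
Proof.
elim: n init K => [|n IH] init K K1; first exact: chain_sum0.
rewrite chain_sumS IH => [|k s]; last exact: K1.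
by rewrite exchange_big; apply: eq_bigr => x _; rewrite -mulr_sumr K1 mulr1.
Qed.

Lemma chain_sum_substochastic n init (K : 'I_n -> T -> T -> R) :
  (forall s, 0 <= init s) -> (forall k s s', 0 <= K k s s') ->
  (forall k s, \sum_s' K k s s' <= 1) -> chain_sum init K <= \sum_s init s.
Proof.
elim: n init K => [|n IH] init K init_ge0 K_ge0 K_le1; first by rewrite chain_sum0.
rewrite chain_sumS; apply: le_trans (IH _ _ _ _ _) _ => //.
- by move=> y; apply: sumr_ge0 => x _; rewrite mulr_ge0.
- rewrite exchange_big; apply: ler_sum => x _.
  by rewrite -mulr_sumr ler_piMr.
Qed.

End ChainSum.

Lemma sum_iid_prod (R : comPzSemiRingType) (T : finType) (l : nat) (p h : T -> R) :
  \sum_(D : {ffun 'I_l -> T}) (\prod_j p (D j)) * \prod_j h (D j) =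
  (\sum_x p x * h x) ^+ l.
Proof.
under eq_bigr do rewrite -big_split /=.
by rewrite -(bigA_distr_bigA (fun _ x => p x * h x)) prodr_const card_ord.
Qed.

Lemma is_distr_card_gt0 (R : realType) (T : finType) (p : T -> R) :
  is_distr p -> (0 < #|T|)%N.
Proof.
move=> [_ p_sum1]; rewrite lt0n; apply: contra_eqN p_sum1 => /eqP/card0_eq T0.
by rewrite big_pred0 // eq_sym oner_eq0.
Qed.

Section Episodes.
Variables (R : realType) (S A : finType) (H : nat).
Variables (d1 : S -> R) (mu : 'I_H -> S -> A -> R) (P : 'I_H -> S -> A -> S -> R).
Hypotheses (hd1 : is_distr d1) (hmu : forall t s, is_distr (mu t s))
  (hP : forall t s a, is_distr (P t s a)).

Lemma sum_episode_chain (F : 'I_H -> S -> A -> S -> R) :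
  \sum_(e : episode H S A) d1 (e.1 ord0) * \prod_(k < H) F k (st e k) (act e k) (nxt e k) =
  chain_sum d1 (fun k s s' => \sum_a F k s a s').
Proof.
rewrite -(pair_big xpredT xpredT (fun (x : {ffun 'I_H.+1 -> S}) (y : {ffun 'I_H -> A}) =>
  d1 (x ord0) * \prod_(k < H) F k (x (widen_ord (leqnSn H) k)) (y k) (x (lift ord0 k)))).
apply: eq_bigr => x _.
by rewrite -big_distrr /= bigA_distr_bigA.
Qed.

Lemma ep_prob_ge0 e : 0 <= ep_prob d1 mu P e.
Proof.
rewrite mulr_ge0 ?hd1.1 //; apply: prodr_ge0 => k _.
by rewrite mulr_ge0 ?(hmu _ _).1 ?(hP _ _ _).1.
Qed.

Lemma sum_ep_prob : \sum_(e : episode H S A) ep_prob d1 mu P e = 1.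
Proof.
rewrite /ep_prob (sum_episode_chain (fun k s a s' => mu k s a * P k s a s')).
rewrite chain_sum_stochastic ?hd1.2 // => k s.
rewrite exchange_big -(hmu k s).2; apply: eq_bigr => a _.
by rewrite -mulr_sumr (hP k s a).2 mulr1.
Qed.

Lemma ep_expect_le1 t (phi : S -> A -> S -> R) :
  (forall s a s', 0 <= phi s a s') ->
  (forall s a, \sum_s' P t s a s' * phi s a s' <= 1) ->
  \sum_(e : episode H S A) ep_prob d1 mu P e * phi (st e t) (act e t) (nxt e t) <= 1.
Proof.
move=> phi_ge0 Pphi_le1.
(* Fold [phi] into the kernel of step [t]; all kernels stay substochastic. *)
pose F k s a s' := mu k s a * P k s a s' * (if k == t then phi s a s' else 1).
have -> : \sum_(e : episode H S A) ep_prob d1 mu P e * phi (st e t) (act e t) (nxt e t) =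
    \sum_(e : episode H S A) d1 (e.1 ord0) * \prod_(k < H) F k (st e k) (act e k) (nxt e k).
  apply: eq_bigr => e _; rewrite /ep_prob /F -mulrA; congr (_ * _).
  by rewrite [RHS]big_split /= -big_mkcond big_pred1_eq.
rewrite sum_episode_chain -[1]hd1.2; apply: chain_sum_substochastic.
- exact: hd1.1.
- move=> k s s'; apply: sumr_ge0 => a _.
  by rewrite !mulr_ge0 ?(hmu _ _).1 ?(hP _ _ _).1 //; case: ifP.
- move=> k s; rewrite exchange_big -(hmu k s).2; apply: ler_sum => a _.
  under eq_bigr do rewrite /F -mulrA.
  rewrite -mulr_sumr ler_piMr ?(hmu _ _).1 //.
  case: eqP => [->|_]; first exact: Pphi_le1.
  by under eq_bigr do rewrite mulr1; rewrite (hP k s a).2.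
Qed.

Lemma data_prob_ge0 l : forall D : dataset l H S A, 0 <= data_prob d1 mu P D.
Proof. by move=> D; apply: prodr_ge0 => j _; exact: ep_prob_ge0. Qed.

Lemma sum_data_prob l : \sum_(D : dataset l H S A) data_prob d1 mu P D = 1.
Proof.
transitivity (\sum_(D : dataset l H S A) data_prob d1 mu P D * \prod_(j < l) (1 : R)).
  by apply: eq_bigr => D _; rewrite big1_eq mulr1.
rewrite /data_prob (sum_iid_prod l (ep_prob d1 mu P) (fun _ => 1)).
by under eq_bigr do rewrite mulr1; rewrite sum_ep_prob expr1n.
Qed.

End Episodes.

Lemma sumr_const_cond (R : pzSemiRingType) (I : finType) (P : pred I) (x : R) :
  \sum_(i | P i) x = #|[set i | P i]|%:R * x.
Proof. by rewrite sumr_const cardsE mulr_natl. Qed.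

Lemma union_bound (R : numDomainType) (T I : finType) (p : T -> R) (E : pred T)
    (B : I -> pred T) :
  (forall x, 0 <= p x) -> \sum_x p x = 1 -> (forall x, ~~ E x -> exists i, B i x) ->
  1 - \sum_i \sum_(x | B i x) p x <= \sum_(x | E x) p x.
Proof.
move=> p_ge0 p_sum1 cover.
rewrite -p_sum1 (bigID E) /= -addrA gerDl subr_le0.
under [X in _ <= X]eq_bigr do rewrite big_mkcond /=.
rewrite exchange_big big_mkcond /=; apply: ler_sum => x _.
case: ifP => [notE|_]; last by apply: sumr_ge0 => i _; case: ifP.
have [i Bix] := cover x notE.
rewrite (bigD1 i) //= Bix lerDl; apply: sumr_ge0 => j _; by case: ifP.
Qed.

Lemma chernoff_selected_sum (R : realType) (T : finType) (l : nat) (p Y : T -> R)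
    (c : pred T) (lam th f m : R) :
  (forall x, 0 <= p x) -> 0 <= lam -> 0 <= th ->
  \sum_x p x * (if c x then expR (lam * (Y x - f) + th) else 1) <= 1 ->
  \sum_(D : {ffun 'I_l -> T} | (m <= #|[set j | c (D j)]|%:R) &&
         (#|[set j | c (D j)]|%:R * f < \sum_(j | c (D j)) Y (D j)))
     \prod_j p (D j)
  <= expR (- (th * m)).
Proof.
move=> p_ge0 lam_ge0 th_ge0 mgf_le1.
pose psi x := if c x then expR (lam * (Y x - f) + th) else 1.
have psi_ge0 x : 0 <= psi x by rewrite /psi; case: ifP => // _; exact: expR_ge0.
have prod_psi (D : {ffun 'I_l -> T}) : \prod_j psi (D j) =
    expR (lam * (\sum_(j | c (D j)) Y (D j) - #|[set j | c (D j)]|%:R * f) +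
          #|[set j | c (D j)]|%:R * th).
  rewrite /psi -big_mkcond /= -expR_sum big_split /= -mulr_sumr sumrB.
  by rewrite !sumr_const_cond.
apply: (@le_trans _ _ (\sum_(D : {ffun 'I_l -> T})
    (\prod_j p (D j)) * (expR (- (th * m)) * \prod_j psi (D j)))).
  rewrite big_mkcond /=; apply: ler_sum => D _.
  have prod_ge0 : 0 <= \prod_j p (D j) by exact: prodr_ge0.
  case: ifP => [/andP[n_ge c_gt] | _]; last first.
    by rewrite mulr_ge0 // mulr_ge0 ?expR_ge0 // prodr_ge0.
  rewrite -[X in X <= _]mulr1 ler_wpM2l // prod_psi -expRD.
  apply: le_trans (expR_ge1Dx _); rewrite lerDl.
  set n := #|_|%:R in n_ge c_gt *; set sY := \sum_(j | _) _ in c_gt *.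
  have : 0 <= lam * (sY - n * f) by rewrite mulr_ge0 // subr_ge0 ltW.
  have : 0 <= th * (n - m) by rewrite mulr_ge0 // subr_ge0.
  lra.
under eq_bigr do rewrite mulrCA.
rewrite -mulr_sumr sum_iid_prod -[X in _ <= X]mulr1 ler_wpM2l ?expR_ge0 //.
by rewrite exprn_ile1 // sumr_ge0 // => x _; rewrite mulr_ge0.
Qed.

Lemma fbonus_ge0 (R : realType) (H : nat) (S A : finType) (l : nat) (u delta d : R) :
  0 <= u -> 0 <= fbonus H S A l u delta d.
Proof. by move=> u_ge0; rewrite mulr_ge0 ?sqrtr_ge0 // mulr_ge0. Qed.

Section ValueDifferenceConcentration.
Variables (R : realType) (S A : finType) (H l : nat).
Variables (d1 : S -> R) (mu : 'I_H -> S -> A -> R) (P : 'I_H -> S -> A -> S -> R).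
Variables (delta u : R) (t : 'I_H) (V Vin : S -> R).
Hypotheses (hd1 : is_distr d1) (hmu : forall t s, is_distr (mu t s))
  (hP : forall t s a, is_distr (P t s a)).
Hypotheses (u_gt0 : 0 < u) (l_gt0 : (0 < l)%N) (hW : forall s, `|V s - Vin s| <= 2 * u).

Local Notation W := (fun x => V x - Vin x).
Local Notation N := (2 * H%:R * #|S|%:R * #|A|%:R).
Local Notation sel s a e := ((st e t == s) && (act e t == a)).

(* [b = false]: the empirical mean over the visits of (s, a) exceeds
   [P_t(.|s,a)^T W] by more than the bonus; [b = true]: it falls short by more. *)
Definition dev_event (s : S) (a : A) (b : bool) (D : dataset l H S A) : bool :=
  let d := dmu d1 mu P t s a in
  let n := (ncount D t s a)%:R in
  (l%:R * d / 2 <= n) &&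
  (n * fbonus H S A l u delta d <
   \sum_(j < l | sel s a (D j)) (-1) ^+ b * (W (nxt (D j) t) - PV P t s a W)).

Lemma tilted_mgf_le1 s a (b : bool) (f : R) :
  \sum_s' P t s a s' *
    expR (f / (4 * u ^+ 2) * ((-1) ^+ b * (W s' - PV P t s a W) - f) + f ^+ 2 / (8 * u ^+ 2))
  <= 1.
Proof.
set m := PV P t s a W; set lam := f / (4 * u ^+ 2).
have Zab x : - (2 * u) - m <= W x - m <= 2 * u - m.
  by have := hW x; rewrite ler_norml => /andP[? ?]; apply/andP; split; lra.
have EZ0 : \sum_x P t s a x * (W x - m) = 0.
  by under eq_bigr do rewrite mulrBr; rewrite sumrB -mulr_suml (hP t s a).2 mul1r subrr.
have ab : - (2 * u) - m < 2 * u - m by have := u_gt0; lra.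
have hoeff := hoeffding_lemma ((-1) ^+ b * lam) (hP t s a) Zab ab EZ0.
have -> : \sum_s' P t s a s' * expR (lam * ((-1) ^+ b * (W s' - m) - f) + f ^+ 2 / (8 * u ^+ 2)) =
    expR (f ^+ 2 / (8 * u ^+ 2) - lam * f) *
    \sum_s' P t s a s' * expR ((-1) ^+ b * lam * (W s' - m)).
  rewrite mulr_sumr; apply: eq_bigr => x _.
  by rewrite [RHS]mulrCA -expRD; congr (_ * expR _); ring.
apply: le_trans (ler_wpM2l (expR_ge0 _) hoeff) _.
rewrite -expRD exprMn sqrr_sign mul1r /lam.
have u_neq0 : u != 0 by rewrite gt_eqF.
by rewrite (_ : _ + _ = 0) ?expR0 //; field.
Qed.

Lemma estimate_error_dev_event D s a : 0 < dmu d1 mu P t s a ->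
  ~~ ((0 <= PV P t s a W - gfun d1 mu P u delta V Vin D t s a)
      && (PV P t s a W - gfun d1 mu P u delta V Vin D t s a
          <= 8 * u * Num.sqrt (ln (N / delta) / (l%:R * dmu d1 mu P t s a)))) ->
  dev_event s a false D || dev_event s a true D.
Proof.
move=> d_gt0; rewrite /gfun /dev_event /=.
set d := dmu d1 mu P t s a; set f := fbonus H S A l u delta d.
set n := (ncount D t s a)%:R; set m := PV P t s a W.
have -> : 8 * u * Num.sqrt (ln (N / delta) / (l%:R * d)) = 2 * f.
  by rewrite /f /fbonus; ring.
have f_ge0 : 0 <= f by rewrite fbonus_ge0 // ltW.
have sum_dev (eps : R) : \sum_(j < l | sel s a (D j)) eps * (W (nxt (D j) t) - m) =
    eps * (\sum_(j < l | sel s a (D j)) W (nxt (D j) t) - n * m).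
  by rewrite -mulr_sumr sumrB sumr_const_cond.
rewrite !sum_dev expr0 expr1 !mul1r !mulN1r.
set sW := \sum_(j < l | _) _.
clearbody f n m sW.
case: ifP => [_|n_large].
  by rewrite (_ : m - (m - f) = f) ?f_ge0 /=; [lra | ring].
have n_ge : l%:R * d / 2 <= n by rewrite leNgt n_large.
have n_gt0 : 0 < n by apply: lt_le_trans n_ge; rewrite divr_gt0 // mulr_gt0 // ltr0n.
rewrite n_ge /=; move: (n^-1 * sW) (mulVKf (lt0r_neq0 n_gt0) sW) => q <-.
rewrite negb_and -!ltNge => /orP[q_gt|q_lt]; apply/orP; [left|right].
  have : 0 < n * (q - m - f) by apply: mulr_gt0 => //; lra.
  nra.
have : 0 < n * (m - q - f) by apply: mulr_gt0 => //; lra.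
nra.
Qed.

Hypothesis Ndelta_gt1 : 1 < N / delta.

Lemma Pr_dev_event_le s a b : 0 < dmu d1 mu P t s a ->
  Pr_data d1 mu P (dev_event s a b) <= delta / N.
Proof.
move=> d_gt0.
set d := dmu d1 mu P t s a; set f := fbonus H S A l u delta d.
(* [lam] and [th] make each factor of the Chernoff product at most one
   ([tilted_mgf_le1]), and [th * (l d / 2) = ln (N / delta)]. *)
set lam := f / (4 * u ^+ 2); set th := f ^+ 2 / (8 * u ^+ 2).
have L_gt0 : 0 < ln (N / delta) by rewrite ln_gt0.
have ld_gt0 : 0 < l%:R * d by rewrite mulr_gt0 // ltr0n.
have -> : delta / N = expR (- (th * (l%:R * d / 2))).
  have -> : th * (l%:R * d / 2) = ln (N / delta).
    rewrite /th /f /fbonus exprMn sqr_sqrtr ?divr_ge0 ?ltW //.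
    by field; rewrite gt_eqF // gt_eqF // gt_eqF // ltr0n.
  by rewrite expRN lnK ?invf_div // posrE (lt_trans ltr01).
apply: (@chernoff_selected_sum _ _ l _
  (fun e => (-1) ^+ b * (W (nxt e t) - PV P t s a W)) (fun e => sel s a e) lam th f).
- exact: ep_prob_ge0.
- by apply: divr_ge0; [exact: fbonus_ge0 (ltW u_gt0) | rewrite mulr_ge0 ?sqr_ge0].
- by apply: divr_ge0; [exact: sqr_ge0 | rewrite mulr_ge0 ?sqr_ge0].
pose phi s0 a0 s' := if (s0 == s) && (a0 == a) then
  expR (lam * ((-1) ^+ b * (W s' - PV P t s a W) - f) + th) else 1.
apply: (ep_expect_le1 hd1 hmu hP (phi := phi)) => [s0 a0 s'|s0 a0].
  by rewrite /phi; case: ifP => _; rewrite ?expR_ge0.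
have [/andP[/eqP-> /eqP->]|sa] := boolP ((s0 == s) && (a0 == a)).
  by under eq_bigr do rewrite /phi !eqxx /=; exact: tilted_mgf_le1.
by under eq_bigr do rewrite /phi (negbTE sa) mulr1; rewrite (hP _ _ _).2.
Qed.

End ValueDifferenceConcentration.

Theorem lemmaB4 (R : realType) (S A : finType) (H l : nat)
  (d1 : S -> R) (mu : 'I_H -> S -> A -> R) (P : 'I_H -> S -> A -> S -> R)
  (delta u : R) (t : 'I_H) (V Vin : S -> R) :
  is_distr d1 ->
  (forall t s, is_distr (mu t s)) ->
  (forall t s a, is_distr (P t s a)) ->
  0 < delta < 1 ->
  0 < u ->
  (0 < l)%N ->
  (forall s, `|V s - Vin s| <= 2 * u) ->
  Pr_data d1 mu P
    (fun D : dataset l H S A =>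
       [forall s : S, forall a : A,
          (0 < dmu d1 mu P t s a) ==>
          ((0 <= PV P t s a (fun x => V x - Vin x) - gfun d1 mu P u delta V Vin D t s a)
           && (PV P t s a (fun x => V x - Vin x) - gfun d1 mu P u delta V Vin D t s a
               <= 8 * u * Num.sqrt (ln (2 * H%:R * #|S|%:R * #|A|%:R / delta)
                                    / (l%:R * dmu d1 mu P t s a))))])
  >= 1 - delta / H%:R.
Proof.
move=> hd1 hmu hP /andP[delta_gt0 delta_lt1] u_gt0 l_gt0 hW.
have S_gt0 := is_distr_card_gt0 hd1; have /card_gt0P[s0 _] := S_gt0.
have A_gt0 := is_distr_card_gt0 (hmu t s0).
have H_gt0 : (0 < H)%N := leq_ltn_trans (leq0n t) (ltn_ord t).
set N := 2 * H%:R * #|S|%:R * #|A|%:R.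
have N_ge1 : 1 <= N by rewrite /N -!natrM ler1n !muln_gt0 H_gt0 S_gt0 A_gt0.
have Ndelta_gt1 : 1 < N / delta by rewrite ltr_pdivlMr // mul1r (lt_le_trans delta_lt1).
pose B (i : S * A * bool) (D : dataset l H S A) :=
  (0 < dmu d1 mu P t i.1.1 i.1.2) && dev_event d1 mu P delta u t V Vin i.1.1 i.1.2 i.2 D.
have PrB i : \sum_(D | B i D) data_prob d1 mu P D <= delta / N.
  case: i => [[s a] b]; rewrite /B /=; case: (ltP 0 (dmu d1 mu P t s a)) => [d_gt0|_].
    exact: Pr_dev_event_le.
  by rewrite big_pred0 // divr_ge0 ?ltW // (lt_le_trans ltr01).
have count : \sum_(i : S * A * bool) delta / N = delta / H%:R.
  rewrite sumr_const !card_prod card_bool -[LHS]mulr_natr !natrM /N; field.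
  by rewrite !pnatr_eq0 -!lt0n H_gt0 S_gt0 A_gt0.
rewrite /Pr_data; apply: (le_trans _ (union_bound (B := B) (data_prob_ge0 hd1 hmu hP (l := l))
  (sum_data_prob hd1 hmu hP l) _)).
  by rewrite lerD2l lerN2 -count; apply: ler_sum => i _; exact: PrB.
move=> D /forallPn[s /forallPn[a]]; rewrite negb_imply => /andP[d_gt0 bad].
have /orP[dev|dev] := estimate_error_dev_event u_gt0 l_gt0 d_gt0 bad.
  by exists (s, a, false); rewrite /B /= d_gt0.
by exists (s, a, true); rewrite /B /= d_gt0.
Qed.
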